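(* Let $G=(V,E)$ be a connected chordal graph with at least two vertices and let $v\in V$. Then: (1) $v\in\mathrm{core}(G)$ if and only if $v\in V^+$; (2) $v\in\mathrm{anticore}(G)$ if and only if $\gamma(G_v+u)=\gamma(G)+1$; (3) $v\in\mathrm{corona}(G)\setminus\mathrm{core}(G)$ if and only if either $v\in V^-$, or $v\in V^0$ and $\gamma(G_v+u)=\gamma(G)$.
   Context: All graphs are finite, simple and undirected. A graph is chordal if it has no induced cycle of length at least four. $\gamma(G)$ is the domination number; a minimum dominating set (mds) is a dominating set of size $\gamma(G)$. $\mathrm{core}(G)$ is the set of vertices in every mds, $\mathrm{corona}(G)$ the set of vertices in at least one mds, $\mathrm{anticore}(G)=V\setminus\mathrm{corona}(G)$. With $G-v$ denoting $G$ with $v$ deleted: $V^+=\{v:\gamma(G-v)>\gamma(G)\}$, $V^0=\{v:\gamma(G-v)=\gamma(G)\}$, $V^-=\{v:\gamma(G-v)<\gamma(G)\}$. $G_v+u$ is the graph obtained from $G$ by adding a new vertex $u$ and the single edge $uv$. *)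

(* Simple graphs: symmetric irreflexive relation e on a finType T. *)
From mathcomp Require Import all_boot.
Set Implicit Arguments. Unset Strict Implicit. Unset Printing Implicit Defensive.

Section Graphs.
Variable T : finType.
Implicit Types (e : rel T) (S D : {set T}) (v : T).

Definition dominates e S D : bool :=
  (D \subset S) && [forall x in S, (x \in D) || [exists y in D, e x y]].

(* domination number of G[S]; S itself dominates G[S], so #|S| is a valid initial bound *)
Definition gamma e S : nat :=
  \big[minn/#|S|]_(D : {set T} | dominates e S D) #|D|.

Definition mds e D : bool := dominates e setT D && (#|D| == gamma e setT).

Definition core e : {set T} := [set v | [forall D, mds e D ==> (v \in D)]].
Definition corona e : {set T} := [set v | [exists D, mds e D && (v \in D)]].
Definition anticore e : {set T} := ~: corona e.

(* gamma(G - v) = gamma of the subgraph induced on V \ {v} *)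
Definition gamma_del e v : nat := gamma e [set~ v].
Definition Vplus e : {set T} := [set v | gamma e setT < gamma_del e v].
Definition Vzero e : {set T} := [set v | gamma_del e v == gamma e setT].
Definition Vminus e : {set T} := [set v | gamma_del e v < gamma e setT].

(* G_v + u : new vertex None joined only to Some v *)
Definition pendant_rel e v : rel (option T) := fun a b =>
  match a, b with
  | Some x, Some y => e x y
  | None, Some y => y == v
  | Some x, None => x == v
  | None, None => false
  end.

Definition connected e : Prop := forall x y : T, connect e x y.

(* p (a duplicate-free vertex sequence, read cyclically) is an induced cycle of length >= 4:
   consecutive vertices (including last-first) are adjacent, and no other pair is adjacent *)
Definition induced_cycle e (p : seq T) : Prop :=
  [/\ 4 <= size p, uniq p, cycle e p &
      forall (x0 : T) i j, i < size p -> j < size p -> e (nth x0 p i) (nth x0 p j) ->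
        (j == (i.+1) %% size p) || (i == (j.+1) %% size p)].
End Graphs.

Definition chordal (T : finType) (e : rel T) : Prop := forall p : seq T, ~ induced_cycle e p.

Definition gamma_pendant (T : finType) (e : rel T) (v : T) : nat :=
  gamma (pendant_rel e v) setT.

(* Deleting v or attaching a pendant vertex u to v changes the domination number by
   at most one, and gamma(G_v + u) = gamma(G) exactly when some minimum dominating set
   contains v; this settles (2), (3) and half of (1) for arbitrary graphs.  The rest of (1)
   is that a core vertex v of a connected chordal graph has gamma(G - v) > gamma(G).
   Otherwise take an mds D containing v, A := D \ v, and a minimum dominating set D' of
   G - v with |D'| <= gamma(G).  Since v is in the core, D' avoids N[v].  In a chordal
   graph the neighbours in N(v) of a component C of G - N[v] form a clique.  Hence, when
   A has no vertex in N(v) adjacent to C, the set D' \ C, A /\ C plus one neighbour of C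
   in N(v) dominates G, so |D' /\ C| <= |A /\ C| by minimality.  Keeping D' on these
   components and A on the rest of G - v gives a dominating set of G - v of size at most
   |A| = gamma(G) - 1, and adding a neighbour of v yields an mds of G avoiding v. *)

From mathcomp Require Import all_boot all_order zify.
Set Implicit Arguments. Unset Strict Implicit. Unset Printing Implicit Defensive.
Import Order.TTheory.

Section Domination.
Variables (T : finType) (e : rel T).
Implicit Types (S D : {set T}) (v : T).

Lemma dominatesP S D :
  reflect (D \subset S /\ forall x, x \in S -> x \in D \/ exists2 y, y \in D & e x y)
          (dominates e S D).
Proof.
apply: (iffP andP) => [[DS /forall_inP domD]|[DS domD]]; split=> //.
  by move=> x /domD /orP[->|/exists_inP[y yD exy]]; [left | right; exists y].
apply/forall_inP => x /domD [->|[y yD exy]] //.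
by apply/orP; right; apply/exists_inP; exists y.
Qed.

Lemma dominates_refl S : dominates e S S.
Proof. by apply/dominatesP; split=> // x ->; left. Qed.

Lemma dominatesU1 S D x : x \in S -> dominates e S D -> dominates e S (x |: D).
Proof.
move=> xS /dominatesP[DS domD]; apply/dominatesP; split.
  by rewrite subUset sub1set xS.
move=> y /domD[yD|[z zD yz]]; first by left; rewrite setU1r.
by right; exists z; rewrite ?setU1r.
Qed.

Lemma gamma_min S D : dominates e S D -> gamma e S <= #|D|.
Proof. exact: (@bigmin_le_cond _ nat _ #|S| D (dominates e S) (fun D => #|D|)). Qed.

Lemma gamma_attained S : exists2 D, dominates e S D & #|D| = gamma e S.
Proof.
have [|D domD gammaD] :=
  @eq_bigmin _ nat _ #|S| S (dominates e S) (fun D => #|D|) (dominates_refl S).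
  by move=> D /andP[DS _]; exact: subset_leq_card.
by exists D; rewrite // /gamma gammaD.
Qed.

Lemma mds_exists : exists D, mds e D.
Proof. by have [D domD cardD] := gamma_attained setT; exists D; rewrite /mds domD cardD eqxx. Qed.

Lemma mds_small D : dominates e setT D -> #|D| <= gamma e setT -> mds e D.
Proof. by move=> domD le_D; rewrite /mds domD eqn_leq le_D gamma_min. Qed.

Lemma coreP v : reflect (forall D, mds e D -> v \in D) (v \in core e).
Proof.
rewrite inE; apply: (iffP forallP) => coreD D; first exact/implyP/coreD.
exact/implyP/coreD.
Qed.

Lemma coronaP v : reflect (exists2 D, mds e D & v \in D) (v \in corona e).
Proof.
rewrite inE; apply: (iffP existsP) => [[D /andP[]]|[D mdsD vD]]; first by exists D.
by exists D; rewrite mdsD.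
Qed.

Lemma core_small_dominating v D :
  v \in core e -> dominates e setT D -> #|D| <= gamma e setT -> v \in D.
Proof. by move=> /coreP vcore domD le_D; apply/vcore/mds_small. Qed.

Lemma dominates_setD1 v D : dominates e setT D -> v \notin D -> dominates e [set~ v] D.
Proof.
move=> /dominatesP[_ domD] vD; apply/dominatesP; split=> [|x _]; last exact: domD.
by apply/subsetP => x xD; rewrite !inE; apply: contraNneq vD => <-.
Qed.

Lemma dominates_del_notin v D : dominates e [set~ v] D -> v \notin D.
Proof. by move=> /andP[/subsetP DS _]; apply: contraTN isT => /DS; rewrite !inE eqxx. Qed.

Lemma dominates_del_adj v w D :
  dominates e [set~ v] D -> w \in D -> e v w -> dominates e setT D.
Proof.
move=> /dominatesP[_ domD] wD vw; apply/dominatesP; split=> [|x _]; first exact: subsetT.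
have [->|xv] := eqVneq x v; first by right; exists w.
by apply: domD; rewrite !inE.
Qed.

Lemma dominates_del_add v D : dominates e [set~ v] D -> dominates e setT (v |: D).
Proof.
move=> /dominatesP[_ domD]; apply/dominatesP; split=> [|x _]; first exact: subsetT.
have [->|xv] := eqVneq x v; first by left; rewrite setU11.
have [xD|[y yD xy]] : x \in D \/ exists2 y, y \in D & e x y by apply: domD; rewrite !inE.
  by left; rewrite setU1r.
by right; exists y; rewrite ?setU1r.
Qed.

Lemma Vplus_core v : v \in Vplus e -> v \in core e.
Proof.
rewrite inE => lt_gamma; apply/coreP => D /andP[domD /eqP cardD].
apply: contraLR lt_gamma => vD; rewrite -leqNgt -cardD.
exact/gamma_min/dominates_setD1.
Qed.

Lemma Vminus_corona v : v \in Vminus e -> v \in corona e.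
Proof.
rewrite inE => lt_gamma; have [D domD cardD] := gamma_attained [set~ v].
apply/coronaP; exists (v |: D); last exact: setU11.
apply: mds_small; first exact: dominates_del_add.
by rewrite cardsU1 (dominates_del_notin domD) cardD add1n.
Qed.

Lemma core_gamma_del v w : v \in core e -> e v w -> w != v -> gamma e setT <= gamma_del e v.
Proof.
move=> vcore vw wv; rewrite leqNgt; apply/negP => lt_gamma.
have [D domD cardD] := gamma_attained [set~ v].
have : v \in w |: D.
  apply: core_small_dominating vcore _ _.
    by apply: dominates_del_adj (setU11 w D) vw; apply: dominatesU1; rewrite // !inE.
  by move: lt_gamma; rewrite cardsU1 cardD /gamma_del; case: (w \in D) => /=; lia.
by rewrite !inE eq_sym (negbTE wv) (negbTE (dominates_del_notin domD)).
Qed.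

End Domination.

Section Pendant.
Variables (T : finType) (e : rel T) (v : T).
Local Notation ep := (pendant_rel e v).

Lemma gamma_pendant_dominating D :
  dominates e setT D -> v \in D -> gamma_pendant e v <= #|D|.
Proof.
move=> /dominatesP[_ domD] vD; apply: leq_trans (gamma_min (D := Some @: D) _) _.
  apply/dominatesP; split=> [|[x|] _]; first exact: subsetT.
    have [xD|[y yD xy]] := domD x (in_setT x); first by left; rewrite imset_f.
    by right; exists (Some y); rewrite ?imset_f.
  by right; exists (Some v); rewrite ?imset_f //= eqxx.
by rewrite card_imset //; exact: Some_inj.
Qed.

Lemma gamma_pendant_leq : gamma_pendant e v <= (gamma e setT).+1.
Proof.
have [D domD cardD] := gamma_attained e setT.
apply: leq_trans (gamma_pendant_dominating (dominatesU1 (in_setT v) domD) (setU11 v D)) _.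
by rewrite cardsU1 cardD; case: (v \in D).
Qed.

Lemma dominates_pendant_trace Y :
  dominates ep setT Y -> dominates e setT (v |: [set x | Some x \in Y]).
Proof.
move=> /dominatesP[_ domY]; apply/dominatesP; split=> [|x _]; first exact: subsetT.
have [xY|[[y|] yY xy]] := domY (Some x) (in_setT _).
- by left; rewrite !inE xY orbT.
- by right; exists y; rewrite // !inE yY orbT.
- by left; rewrite (eqP xy) setU11.
Qed.

Lemma card_pendant_trace Y :
  dominates ep setT Y -> #|v |: [set x | Some x \in Y]| <= #|Y|.
Proof.
move=> /dominatesP[_ domY].
pose f x := if Some x \in Y then Some x else None.
have notinY x : x \in v |: [set x | Some x \in Y] -> Some x \notin Y -> x = v.
  by rewrite !inE => /orP[/eqP //|->].
rewrite -(card_in_imset (f := f)); last first.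
  move=> x y xX yX; rewrite /f.
  case: ifPn => xY; case: ifPn => yY; [by case | by [] | by [] |].
  by rewrite (notinY x xX xY) (notinY y yX yY).
apply/subset_leq_card/subsetP => _ /imsetP[x xX ->]; rewrite /f.
case: ifPn => // xY; have xv := notinY x xX xY.
have [//|[[y|] yY //= /eqP yv]] := domY None (in_setT _).
by move: xY; rewrite xv -yv yY.
Qed.

Lemma gamma_leq_pendant : gamma e setT <= gamma_pendant e v.
Proof.
have [Y domY cardY] := gamma_attained ep setT.
rewrite /gamma_pendant -cardY.
exact: leq_trans (gamma_min (dominates_pendant_trace domY)) (card_pendant_trace domY).
Qed.

Lemma gamma_pendant_corona : gamma_pendant e v = gamma e setT <-> v \in corona e.
Proof.
split=> [gamma_eq|/coronaP[D /andP[domD /eqP cardD] vD]].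
  have [Y domY cardY] := gamma_attained ep setT.
  apply/coronaP; exists (v |: [set x | Some x \in Y]); last exact: setU11.
  apply: mds_small; first exact: dominates_pendant_trace.
  by rewrite -gamma_eq /gamma_pendant -cardY card_pendant_trace.
by apply/eqP; rewrite eqn_leq gamma_leq_pendant -cardD gamma_pendant_dominating.
Qed.

End Pendant.

Section InducedCycle.
Variables (T : finType) (e : rel T).
Hypotheses (e_sym : symmetric e) (e_irr : irreflexive e).

Definition chordless n (f : nat -> T) : Prop :=
  forall i j, i < j -> j < n -> e (f i) (f j) -> j = i.+1.

Lemma induced_cycle_apex n (f : nat -> T) (w : T) :
    3 <= n -> chordless n f -> (forall i, i.+1 < n -> e (f i) (f i.+1)) ->
    (forall i, i < n -> e w (f i) = (i == 0) || (i == n.-1)) ->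
    {in gtn n &, injective f} -> (forall i, i < n -> f i != w) ->
  induced_cycle e (w :: mkseq f n).
Proof.
move=> n3 chordless_f hedge hw hinj hne.
split.
- by rewrite /= size_mkseq.
- rewrite /= (introT (mkseq_uniqP _ _) hinj) andbT; apply/negP => /mapP [i].
  by rewrite mem_iota => /andP [_ hi] /eqP; rewrite eq_sym (negbTE (hne i hi)).
- rewrite /cycle rcons_path; apply/andP; split.
    apply/(pathP w) => i; rewrite size_mkseq => hi.
    rewrite (nth_mkseq _ _ hi); case: i hi => [|i] hi /=.
      by rewrite hw // eqxx.
    by rewrite nth_mkseq ?hedge //; lia.
  rewrite (last_nth w) size_mkseq.
  case: n n3 {chordless_f hedge hw hinj hne} (hw) => [//|m] _ hw' /=.
  rewrite nth_mkseq // e_sym hw' //; by rewrite /= eqxx orbT.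
- move=> x0 i j; rewrite /= size_mkseq => hi hj.
  case: i hi => [|i] hi; case: j hj => [|j] hj /=.
  + by rewrite e_irr.
  + rewrite nth_mkseq; last lia.
    rewrite hw; last lia.
    case/orP => /eqP hj'.
      by rewrite hj' (@modn_small 1) ?eqxx //; lia.
    have hn : j.+2 = n.+1 by lia.
    by rewrite hn modnn eqxx orbT.
  + rewrite nth_mkseq; last lia.
    rewrite e_sym hw; last lia.
    case/orP => /eqP hi'.
      by rewrite hi' (@modn_small 1) ?eqxx ?orbT //; lia.
    have hn : i.+2 = n.+1 by lia.
    by rewrite hn modnn eqxx.
  + rewrite !nth_mkseq; try lia.
    move=> hij; case: (ltngtP i j) => hc.
    * have hji : j = i.+1 by apply: chordless_f => //; lia.
      by rewrite hji (@modn_small i.+2) ?eqxx //; lia.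
    * rewrite e_sym in hij; have hji : i = j.+1 by apply: chordless_f => //; lia.
      by rewrite hji (@modn_small j.+2) ?eqxx ?orbT //; lia.
    * by move: hij; rewrite hc e_irr.
Qed.
End InducedCycle.

Definition nonnbr (T : finType) (e : rel T) (v : T) : {set T} :=
  [set y | (y != v) && ~~ e v y].

Definition induced (T : finType) (e : rel T) (S : {set T}) : rel T :=
  fun a b => [&& e a b, a \in S & b \in S].

Lemma nbr_nonnbr (T : finType) (e : rel T) v a : e v a -> a \notin nonnbr e v.
Proof. by rewrite inE => ->; rewrite andbF. Qed.

Lemma induced_sym (T : finType) (e : rel T) S : symmetric e -> symmetric (induced e S).
Proof.
move=> e_sym x y; rewrite /induced e_sym.
by case: (x \in S); case: (y \in S); rewrite ?andbT ?andbF.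
Qed.

Section ChordalClique.
Variables (T : finType) (e : rel T).
Hypotheses (e_sym : symmetric e) (e_irr : irreflexive e) (e_chordal : chordal e).
Variables v z x : T.
Hypotheses (vz : e v z) (vx : e v x) (zx : z != x).
Local Notation W := (nonnbr e v).

(* The walk [z = f 0, f 1, ..., f k, f k.+1 = x] with its interior outside N[v];
   [0 < k] makes [v :: f] a cycle of length at least 4. *)
Definition nonnbr_walk k (f : nat -> T) : Prop :=
  [/\ 0 < k, f 0 = z, f k.+1 = x, (forall i, 0 < i <= k -> f i \in W) &
      (forall i, i <= k -> e (f i) (f i.+1))].

Lemma nonnbr_walk_exists c1 c2 :
  c1 \in W -> connect (induced e W) c1 c2 -> e z c1 -> e x c2 -> exists k f, nonnbr_walk k f.
Proof.
move=> c1W /connectP[p pW ->] zc1 xc2.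
pose f i := if i == 0 then z else if i <= (size p).+1 then nth c1 (c1 :: p) i.-1 else x.
have inW i : i <= size p -> nth c1 (c1 :: p) i \in W.
  by case: i => [|i] hi //=; move/(pathP c1): pW => /(_ i hi) /and3P[].
exists (size p).+1, f; split=> //.
- by rewrite /f /= ltnn.
- by move=> [|i] // /andP[_ hi]; rewrite /f /= hi inW.
- case=> [|i] hi; first by rewrite /f.
  rewrite /f /= hi; case: (ltnP i.+1 (size p).+1) => hi2.
    by move/(pathP c1): pW => /(_ i hi2) /andP[].
  have -> : i = size p by lia.
  by rewrite -last_nth e_sym.
Qed.

Lemma nonnbr_walk_shortcut k f i j :
    nonnbr_walk k f -> i.+1 < j -> j <= k.+1 -> e (f i) (f j) -> ~~ ((i == 0) && (j == k.+1)) ->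
  nonnbr_walk (k - (j - i.+1)) (fun m => if m <= i then f m else f (m + (j - i.+1))).
Proof.
move=> [k0 f0 fk fW fe] hij hjk hf hn.
have {}hn : 0 < i \/ j <= k by move: hn; case: i {hij hf} => [|i]; [rewrite eqxx /=; lia | lia].
split=> //.
- lia.
- by rewrite ifF -?fk; [congr f | ]; lia.
- by move=> m hm; case: ifP => hmi; apply: fW; lia.
- move=> m hm /=; case: (ltngtP m i) => hmi; first by apply: fe; lia.
    by rewrite addSn; apply: fe; lia.
  by rewrite hmi subnKC // ltnW.
Qed.

Lemma nonnbr_walk_mem k f i : nonnbr_walk k f -> i < k.+2 -> (f i \in W) = (0 < i <= k).
Proof.
case=> _ f0 fk fW _ hi; case: (posnP i) => [->|i0].
  by rewrite f0 (negbTE (nbr_nonnbr vz)).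
case: (ltngtP i k.+1) => hik; [by rewrite fW ?i0 | lia |].
by rewrite hik fk (negbTE (nbr_nonnbr vx)) ltnn andbF.
Qed.

Lemma nonnbr_walk_apex k f i : nonnbr_walk k f -> i < k.+2 ->
  e v (f i) = (i == 0) || (i == k.+1).
Proof.
move=> walk hi; have [_ f0 fk _ _] := walk; case: (posnP i) => [->|i0]; first by rewrite f0 vz.
case: (ltngtP i k.+1) => hik; last by rewrite hik fk vx orbT.
  have : f i \in W by rewrite (nonnbr_walk_mem walk hi) i0 -ltnS hik.
  by rewrite inE => /andP[_ /negbTE ->].
lia.
Qed.

Lemma nonnbr_walk_inj k f :
  nonnbr_walk k f -> chordless e k.+2 f -> {in gtn k.+2 &, injective f}.
Proof.
move=> walk hind; have [_ f0 fk _ fe] := walk.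
suff lt_inj i j : i < j -> j < k.+2 -> f i <> f j.
  move=> i j hi hj fij.
  by case: (ltngtP i j) => // hij; [case: (lt_inj i j) | case: (lt_inj j i)].
move=> hij hj fij; case: (ltngtP j i.+1) => hj1; first lia; last first.
  by move: (fe i); rewrite fij -hj1 e_irr; lia.
case: (ltnP j.+1 k.+2) => hj2.
  by have := hind i j.+1 _ hj2; rewrite fij => /(_ _ (fe j _)); lia.
have hjk : j = k.+1 by lia.
case: (posnP i) => [i0|i0]; first by move: zx; rewrite -f0 -fk -hjk -i0 fij eqxx.
have := nonnbr_walk_mem walk (ltn_trans hij hj).
by rewrite fij hjk fk (negbTE (nbr_nonnbr vx)); lia.
Qed.

Lemma nonnbr_walk_chord k f : nonnbr_walk k f -> ~ chordless e k.+2 f.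
Proof.
move=> walk hind; have [k0 _ _ _ fe] := walk.
apply: (e_chordal (p := v :: mkseq f k.+2)).
apply: induced_cycle_apex => //.
- by move=> i hi; rewrite (nonnbr_walk_apex walk hi).
- exact: nonnbr_walk_inj.
- move=> i hi; apply/eqP => fiv; have := nonnbr_walk_apex walk hi.
  have := nonnbr_walk_mem walk hi; rewrite fiv e_irr inE eqxx /=; lia.
Qed.

Lemma nonnbr_walk_adj k f : nonnbr_walk k f -> e z x.
Proof.
elim/ltn_ind: k f => k IH f walk.
have [/existsP[i /existsP[j /andP[hij hf]]]|nochord] :=
  boolP [exists i : 'I_k.+2, exists j : 'I_k.+2, (i.+1 < j) && e (f i) (f j)].
  have [k0 f0 fk _ _] := walk.
  have [/andP[/eqP i0 /eqP jk]|hn] := boolP ((i == 0 :> nat) && (j == k.+1 :> nat)).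
    by move: hf; rewrite i0 jk f0 fk.
  have j_lt := ltn_ord j; apply: IH (nonnbr_walk_shortcut walk hij _ hf hn); lia.
case: (nonnbr_walk_chord walk) => i j hij hj hf; apply/eqP; apply: contraNT nochord => hne.
apply/existsP; exists (Ordinal (ltn_trans hij hj)); apply/existsP; exists (Ordinal hj).
by rewrite /= hf andbT; lia.
Qed.

Lemma chordal_nbr_comp_adj c1 c2 :
  c1 \in W -> connect (induced e W) c1 c2 -> e z c1 -> e x c2 -> e z x.
Proof.
move=> c1W c1c2 zc1 xc2.
by have [k [f /nonnbr_walk_adj]] := nonnbr_walk_exists c1W c1c2 zc1 xc2.
Qed.

End ChordalClique.

Lemma card_closed_leq (T : finType) (r : rel T) (X Y K : {set T}) :
  connect_sym r -> closed r K ->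
  (forall c, c \in K -> #|X :&: [set y | connect r c y]| <= #|Y :&: [set y | connect r c y]|) ->
  #|X :&: K| <= #|Y :&: K|.
Proof.
move=> rsym; elim: {K}_.+1 {-2}K (ltnSn #|K|) => // n IH K ltK Kcl le_comp.
have [->|[c cK]] := set_0Vmem K; first by rewrite !setI0 !cards0.
set C := [set y | connect r c y].
have CK : C \subset K by apply/subsetP => y; rewrite inE => /(closed_connect Kcl) <-.
have KCcl : closed r (K :\: C).
  by move=> x y rxy; rewrite !inE (Kcl x y rxy) (same_connect_r rsym (connect1 rxy)).
have ltKC : #|K :\: C| < n.
  rewrite ltnS in ltK; apply: leq_trans ltK.
  apply/proper_card/properP; split; first exact: subsetDl.
  by exists c; rewrite // !inE connect0.
have cardI B : #|B :&: K| = #|B :&: C| + #|B :&: (K :\: C)|.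
  by rewrite setIDA -(cardsID C (B :&: K)) -setIA (setIidPr CK).
rewrite !cardI leq_add ?le_comp // IH // => y /setDP[yK _]; exact: le_comp.
Qed.

Section CoreVplus.
Variables (T : finType) (e : rel T).
Hypotheses (e_sym : symmetric e) (e_irr : irreflexive e).
Hypotheses (e_conn : connected e) (e_chordal : chordal e).
Variable v : T.
Local Notation W := (nonnbr e v).
Local Notation eW := (induced e W).
Local Notation comp c := [set y | connect eW c y].

Lemma nonnbr_connect_sym : connect_sym eW.
Proof. exact/sym_connect_sym/induced_sym. Qed.

Lemma nonnbr_cases y : [\/ y = v, e v y | y \in W].
Proof.
rewrite inE; have [->|yv] := eqVneq y v; first by constructor 1.
by case: (boolP (e v y)) => vy; [constructor 2 | constructor 3].
Qed.

Lemma nonnbr_adj c y : c \in W -> e c y -> e v y \/ connect eW c y.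
Proof.
move=> cW cy; case: (nonnbr_cases y) => [yv|vy|yW]; [|by left|].
  by move: cW; rewrite inE -yv e_sym cy andbF.
by right; apply: connect1; rewrite /induced cy cW yW.
Qed.

Lemma nonnbr_comp_exit c : c \in W -> exists c' a, [/\ connect eW c c', e v a & e c' a].
Proof.
move=> cW; have /connectP[p] := e_conn c v.
elim: p c cW => [|a p IH] c cW /=; first by move=> _ cv; move: cW; rewrite inE cv eqxx.
case/andP => ca pa lastv; case: (nonnbr_cases a) => [av|va|aW].
- by move: cW; rewrite inE -av e_sym ca andbF.
- by exists c, a.
- have [c' [a' [ac' va' c'a']]] := IH a aW pa lastv; exists c', a'; split=> //.
  by apply: connect_trans ac'; apply: connect1; rewrite /induced ca cW aW.
Qed.

Lemma exists_nbr : 1 < #|T| -> exists w, e v w.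
Proof.
move=> /card_gt1P[x [y [_ _ xy]]].
have [u uv] : exists u, u != v.
  by have [xv|] := eqVneq x v; [exists y; rewrite -xv eq_sym | exists x].
have /connectP[[|w p] /= vp uE] := e_conn v u; first by rewrite uE eqxx in uv.
by exists w; case/andP: vp.
Qed.

Section Exchange.
Variables A D' : {set T}.
Hypothesis vcore : v \in core e.
Hypotheses (domA : dominates e setT (v |: A)) (vA : v \notin A).
Hypotheses (domD' : dominates e [set~ v] D') (cardD' : #|D'| <= gamma e setT).

Definition attached : {set T} :=
  [set c in W | [exists a in A, e v a && [exists c', connect eW c c' && e a c']]].
Definition unattached : {set T} := W :\: attached.

Lemma in_unattached c : (c \in unattached) = (c \notin attached) && (c \in W).
Proof. exact: in_setD. Qed.

Lemma dom_del_nonnbr : D' \subset W.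
Proof.
apply/subsetP => y yD'; have vD' := dominates_del_notin domD'.
rewrite inE; apply/andP; split; first by apply: contraNneq vD' => <-.
apply/negP => vy.
have := core_small_dominating vcore (dominates_del_adj domD' yD' vy) cardD'.
by rewrite (negbTE vD').
Qed.

Lemma dominated_del y : y != v -> y \in D' \/ exists2 d, d \in D' & e y d.
Proof. by move=> yv; case/dominatesP: domD' => _; apply; rewrite !inE. Qed.

Lemma dominated_nonnbr y : y \in W -> y \in A \/ exists2 b, b \in A & e y b.
Proof.
rewrite inE => /andP[yv nvy]; case/dominatesP: domA => _ /(_ y (in_setT y)).
case=> [|[b]]; rewrite in_setU1 ?(negbTE yv) /=; first by left.
case/orP=> [/eqP ->|bA yb]; first by rewrite e_sym (negbTE nvy).
by right; exists b.
Qed.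

Lemma attached_closed : closed eW attached.
Proof.
move=> x y xy; have /and3P[_ xW yW] := xy.
rewrite /attached !inE; move: xW yW; rewrite !inE => -> ->.
have sameC := same_connect1 nonnbr_connect_sym xy.
by under eq_existsb => a do under eq_existsb => c' do rewrite sameC.
Qed.

Lemma unattached_closed : closed eW unattached.
Proof.
by move=> x y xy; rewrite !in_unattached (attached_closed xy); case/and3P: xy => _ -> ->.
Qed.

Lemma nbr_unattached a : e v a -> a \notin unattached.
Proof. by move=> /nbr_nonnbr aW; rewrite in_unattached (negbTE aW) andbF. Qed.

Lemma swap_comp_dominates c c' x0 :
  c \in unattached -> connect eW c c' -> e v x0 -> e c' x0 ->
  dominates e setT ((D' :\: comp c) :|: (A :&: comp c) :|: [set x0]).
Proof.
rewrite in_unattached => /andP[c_unatt cW] cc' vx0 c'x0.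
have D'W := subsetP dom_del_nonnbr.
apply/dominatesP; split=> [|y _]; first exact: subsetT.
case: (nonnbr_cases y) => [->|vy|yW].
- by right; exists x0; rewrite // !inE eqxx orbT.
- have yv : y != v by apply: contraTneq vy => ->; rewrite e_irr.
  have [yD'|[d dD' yd]] := dominated_del yv.
    by have := D'W y yD'; rewrite (negbTE (nbr_nonnbr vy)).
  have [cd|ncd] := boolP (connect eW c d); last by right; exists d; rewrite // !inE ncd dD'.
  have [->|yx0] := eqVneq y x0; first by left; rewrite !inE eqxx orbT.
  right; exists x0; first by rewrite !inE eqxx orbT.
  (* [y] and [x0] are neighbours of [v] that both see the component of [c]. *)
  apply: (chordal_nbr_comp_adj e_sym e_irr e_chordal vy vx0 yx0 (D'W d dD') _ yd).
    by apply: connect_trans cc'; rewrite nonnbr_connect_sym.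
  by rewrite e_sym.
- have [cy|ncy] := boolP (connect eW c y).
    have [yA|[b bA yb]] := dominated_nonnbr yW; first by left; rewrite !inE yA cy orbT.
    right; exists b => //; rewrite !inE bA /=.
    case: (nonnbr_adj yW yb) => [vb|yb']; last by rewrite (connect_trans cy yb') orbT.
    case/negP: c_unatt; rewrite /attached in_set cW; apply/exists_inP; exists b => //.
    by rewrite vb; apply/existsP; exists y; rewrite cy e_sym.
  have yv : y != v by apply: contraTneq yW => ->; rewrite inE eqxx.
  have [yD'|[d dD' yd]] := dominated_del yv; first by left; rewrite !inE ncy yD'.
  right; exists d => //; case: (nonnbr_adj yW yd) => [vd|yd'].
    by have := D'W d dD'; rewrite (negbTE (nbr_nonnbr vd)).
  have ncd : ~~ connect eW c d.
    by apply: contra ncy => cd; rewrite (connect_trans cd) // nonnbr_connect_sym.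
  by rewrite !inE ncd dD'.
Qed.

Lemma card_comp_leq c : c \in unattached -> #|D' :&: comp c| <= #|A :&: comp c|.
Proof.
move=> cU; have cW : c \in W by move: cU; rewrite in_unattached => /andP[].
have [c' [x0 [cc' vx0 c'x0]]] := nonnbr_comp_exit cW.
rewrite leqNgt; apply/negP => lt_card.
have cardE : #|(D' :\: comp c) :|: (A :&: comp c) :|: [set x0]| <= gamma e setT.
  have := cardsID (comp c) D'; have := (leq_card_setU (D' :\: comp c :|: A :&: comp c) [set x0]).1.
  have := (leq_card_setU (D' :\: comp c) (A :&: comp c)).1; rewrite cards1; lia.
have := core_small_dominating vcore (swap_comp_dominates cU cc' vx0 c'x0) cardE.
rewrite !inE (negbTE (dominates_del_notin domD')) (negbTE vA) andbF /=.
by apply/negP; apply: contraTneq vx0 => <-; rewrite e_irr.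
Qed.

Lemma card_unattached_leq : #|D' :&: unattached| <= #|A :&: unattached|.
Proof. exact: card_closed_leq nonnbr_connect_sym unattached_closed card_comp_leq. Qed.

Lemma trade_dominates : dominates e [set~ v] ((D' :&: unattached) :|: (A :\: unattached)).
Proof.
have D'W := subsetP dom_del_nonnbr.
apply/dominatesP; split.
  apply/subsetP => y; rewrite in_setU in_setI in_setD in_setC1.
  case/orP=> [/andP[yD' _]|/andP[_ yA]].
    by apply: contraNneq (dominates_del_notin domD') => <-.
  by apply: contraNneq vA => <-.
move=> y; rewrite in_setC1 => yv.
case: (nonnbr_cases y) => [yv'|vy|yW]; first by rewrite yv' eqxx in yv.
- have [yD'|[d dD' yd]] := dominated_del yv.
    by have := D'W y yD'; rewrite (negbTE (nbr_nonnbr vy)).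
  have [dAtt|dU] := boolP (d \in attached); last first.
    by right; exists d; rewrite // in_setU in_setI dD' /= in_unattached dU (D'W d dD').
  move: dAtt; rewrite /attached in_set => /andP[dW /exists_inP[a aA]].
  case/andP=> va /existsP[c' /andP[dc' ac']].
  have aF : a \in (D' :&: unattached) :|: (A :\: unattached).
    by rewrite in_setU in_setD (nbr_unattached va) aA orbT.
  have [->|ya] := eqVneq y a; first by left.
  right; exists a => //.
  exact: (chordal_nbr_comp_adj e_sym e_irr e_chordal vy va ya dW dc' yd ac').
- have [yAtt|yU] := boolP (y \in attached).
    have [yA|[b bA yb]] := dominated_nonnbr yW.
      by left; rewrite in_setU in_setD in_unattached yAtt yA orbT.
    right; exists b => //; rewrite in_setU in_setD bA andbT; apply/orP; right.
    case: (nonnbr_adj yW yb) => [/nbr_unattached //|yb'].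
    by rewrite in_unattached -(closed_connect attached_closed yb') yAtt.
  have yU' : y \in unattached by rewrite in_unattached yU yW.
  have [yD'|[d dD' yd]] := dominated_del yv; first by left; rewrite in_setU in_setI yD' yU'.
  right; exists d => //; case: (nonnbr_adj yW yd) => [vd|yd'].
    by have := D'W d dD'; rewrite (negbTE (nbr_nonnbr vd)).
  by rewrite in_setU in_setI dD' -(closed_connect unattached_closed yd') yU'.
Qed.

Lemma gamma_del_leq : gamma_del e v <= #|A|.
Proof.
apply: leq_trans (gamma_min trade_dominates) _; apply: leq_trans (leq_card_setU _ _) _.
by rewrite -(cardsID unattached A) leq_add2r card_unattached_leq.
Qed.

End Exchange.

Lemma core_Vplus : 1 < #|T| -> v \in core e -> v \in Vplus e.
Proof.
move=> hT vcore; have [w vw] := exists_nbr hT.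
have wv : w != v by apply: contraTneq vw => ->; rewrite e_irr.
have le_del := core_gamma_del vcore vw wv.
rewrite inE ltnNge; apply/negP => ge_del.
have [D mdsD] := mds_exists e; have vD := coreP _ _ vcore D mdsD.
have [D' domD' cardD'] := gamma_attained e [set~ v].
have domA : dominates e setT (v |: (D :\ v)) by rewrite setD1K //; case/andP: mdsD.
have := gamma_del_leq vcore domA (negbT (setD11 v D)) domD'.
rewrite cardD' => /(_ ge_del).
have := cardsD1 v D; rewrite vD (eqP (andP mdsD).2); lia.
Qed.

End CoreVplus.

Theorem theorem6 (T : finType) (e : rel T)
  (e_sym : symmetric e) (e_irr : irreflexive e)
  (e_conn : connected e) (e_chordal : chordal e)
  (hT : 1 < #|T|) (v : T) :
  [/\ (v \in core e) <-> (v \in Vplus e),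
      (v \in anticore e) <-> (gamma_pendant e v = (gamma e setT).+1) &
      (v \in corona e :\: core e) <->
        ((v \in Vminus e) \/ ((v \in Vzero e) /\ gamma_pendant e v = gamma e setT))].
Proof.
have core_Vplus_eq : (v \in core e) = (v \in Vplus e).
  by apply/idP/idP; [exact: (core_Vplus e_sym e_irr e_conn e_chordal hT) | exact: Vplus_core].
have corona_iff := gamma_pendant_corona e v.
have gp_ge := gamma_leq_pendant e v; have gp_le := gamma_pendant_leq e v.
split; first by rewrite core_Vplus_eq.
  rewrite inE; split=> [ncorona | gp_eq]; last by apply/negP => /corona_iff; lia.
  suff : gamma_pendant e v != gamma e setT by lia.
  by apply: contra ncorona => /eqP /corona_iff.
rewrite in_setD core_Vplus_eq [v \in Vplus e]inE [v \in Vminus e]inE.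
rewrite [v \in Vzero e]inE -leqNgt.
split.
  case/andP=> /[swap] vcorona; rewrite leq_eqVlt => /orP[/eqP gamma_eq|]; last by left.
  by right; split; [exact/eqP | exact/corona_iff].
case=> [lt_del|[/eqP gamma_eq gp_eq]]; last by rewrite gamma_eq leqnn; exact/corona_iff.
by rewrite ltnW //; apply: Vminus_corona; rewrite inE.
Qed.
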